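(* $\mathrm{LTL}\geq\mathrm{HS}_{\mathsf{lin}}$: for every $\mathrm{HS}$ formula $\psi$ there is an $\mathrm{LTL}$ formula $\varphi$ such that for every finite Kripke structure $K$, $K\models_{\mathsf{lin}}\psi$ iff $K\models\varphi$.
   Context: A Kripke structure over a finite set $\mathcal{AP}$ is $K=(\mathcal{AP},S,\delta,\mu,s_0)$ with states $S$, left-total $\delta\subseteq S\times S$, labelling $\mu:S\to2^{\mathcal{AP}}$, initial state $s_0$; finite if $S$ is finite. An infinite path is an infinite state sequence $\pi$ with $(\pi(i),\pi(i+1))\in\delta$; initial if $\pi(0)=s_0$. $\mathrm{HS}$ formulas: $\psi::=p\mid\neg\psi\mid\psi\wedge\psi\mid\langle X\rangle\psi$, $X$ ranging over the Allen relations $A,L,B,E,D,O$ and their inverses; under the non-strict semantics all modalities are definable from $\langle B\rangle,\langle E\rangle,\langle\bar B\rangle,\langle\bar E\rangle$. Trace-based semantics: for an infinite path $\pi$, intervals $[i,j]$ with $0\le i\le j$; $[i,j]\models p$ iff $p\in\mu(\pi(h))$ for all $i\le h\le j$; $[x,y]\models\langle B\rangle\psi$ iff $[x,z]\models\psi$ for some $x\le z<y$; $[x,y]\models\langle E\rangle\psi$ iff $[v,y]\models\psi$ for some $x<v\le y$; $[x,y]\models\langle\bar B\rangle\psi$ iff $[x,z]\models\psi$ for some $z>y$; $[x,y]\models\langle\bar E\rangle\psi$ iff $[v,y]\models\psi$ for some $v<x$. $K\models_{\mathsf{lin}}\psi$ iff for every initial infinite path $\pi$ and every $i\ge0$, $[0,i]\models\psi$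 in $\pi$. $\mathrm{LTL}$: $\varphi::=\top\mid p\mid\neg\varphi\mid\varphi\wedge\varphi\mid\mathsf X\varphi\mid\varphi\mathsf U\varphi$ with standard semantics over positions of infinite paths; $K\models\varphi$ iff $\pi,0\models\varphi$ for every initial infinite path $\pi$. *)

From mathcomp Require Import all_boot.
Set Implicit Arguments. Unset Strict Implicit. Unset Printing Implicit Defensive.

Record Kripke (AP : finType) := {
  kS : finType;
  kdelta : rel kS;
  ktotal : forall s : kS, exists t : kS, kdelta s t;
  kmu : kS -> {set AP};
  ks0 : kS
}.
Arguments kS {AP} k.
Arguments kdelta {AP} k.
Arguments ktotal {AP} k.
Arguments kmu {AP} k.
Arguments ks0 {AP} k.

Definition is_path (AP : finType) (K : Kripke AP) (pi : nat -> kS K) : Prop :=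
  forall i, kdelta K (pi i) (pi i.+1).

Definition is_initial_path (AP : finType) (K : Kripke AP) (pi : nat -> kS K) : Prop :=
  @is_path AP K pi /\ pi 0 = ks0 K.

(* Allen relations A, L, B, E, D, O and their inverses (suffix "i"). *)
Inductive allen := RA | RL | RB | RE | RD | RO | RAi | RLi | RBi | REi | RDi | ROi.

Inductive hs (AP : Type) :=
  | HSProp of AP
  | HSNot of hs AP
  | HSAnd of hs AP & hs AP
  | HSDia of allen & hs AP.

(* non-strict trace-based semantics of HS on an interval [x,y] (x <= y)
   of the trace lab (lab h = label of the h-th state of the path) *)
Fixpoint hs_sat (AP : finType) (lab : nat -> {set AP}) (x y : nat) (f : hs AP) : Prop :=
  match f with
  | HSProp p => forall h, x <= h <= y -> p \in lab h
  | HSNot g => ~ hs_sat lab x y g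
  | HSAnd g1 g2 => hs_sat lab x y g1 /\ hs_sat lab x y g2
  | HSDia X g =>
    match X with
    | RA  => exists v, y <= v /\ hs_sat lab y v g
    | RL  => exists z v, y < z /\ z <= v /\ hs_sat lab z v g
    | RB  => exists z, x <= z /\ z < y /\ hs_sat lab x z g
    | RE  => exists v, x < v /\ v <= y /\ hs_sat lab v y g
    | RD  => exists v z, x < v /\ v <= z /\ z < y /\ hs_sat lab v z g
    | RO  => exists v z, x < v /\ v <= y /\ y < z /\ hs_sat lab v z g
    | RAi => exists v, v <= x /\ hs_sat lab v x g
    | RLi => exists v z, v <= z /\ z < x /\ hs_sat lab v z g
    | RBi => exists z, y < z /\ hs_sat lab x z g
    | REi => exists v, v < x /\ hs_sat lab v y g
    | RDi => exists v z, v < x /\ y < z /\ hs_sat lab v z g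
    | ROi => exists v z, v < x /\ x <= z /\ z < y /\ hs_sat lab v z g
    end
  end.

Definition hs_models_lin (AP : finType) (K : Kripke AP) (psi : hs AP) : Prop :=
  forall pi : nat -> kS K, @is_initial_path AP K pi ->
    forall i, hs_sat (fun h => kmu K (pi h)) 0 i psi.

Inductive ltl (AP : Type) :=
  | LTrue
  | LProp of AP
  | LNot of ltl AP
  | LAnd of ltl AP & ltl AP
  | LNext of ltl AP
  | LUntil of ltl AP & ltl AP.

Fixpoint ltl_sat (AP : finType) (lab : nat -> {set AP}) (i : nat) (f : ltl AP) : Prop :=
  match f with
  | LTrue => True
  | LProp p => p \in lab i
  | LNot g => ~ ltl_sat lab i g
  | LAnd g1 g2 => ltl_sat lab i g1 /\ ltl_sat lab i g2
  | LNext g => ltl_sat lab i.+1 g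
  | LUntil g1 g2 => exists k, i <= k /\ ltl_sat lab k g2 /\
                      forall h, i <= h < k -> ltl_sat lab h g1
  end.

Definition ltl_models (AP : finType) (K : Kripke AP) (phi : ltl AP) : Prop :=
  forall pi : nat -> kS K, @is_initial_path AP K pi ->
    ltl_sat (fun h => kmu K (pi h)) 0 phi.

From mathcomp Require Import all_boot zify.
From Stdlib Require Import Classical.
From Stdlib Require List.
Set Implicit Arguments. Unset Strict Implicit. Unset Printing Implicit Defensive.

(* Marking the two endpoints of the current interval by fresh propositions
   turns an HS formula into a formula of temporal logic with strict until and
   since, evaluated at position 0: every HS modality moves one or both
   markers.  A marker can be moved thanks to Gabbay's separation theorem: a
   formula holding at 0 is equivalent, at the marked position, to a boolean
   combination of pure past and pure future formulas, inside which the marker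
   is false and can be erased.  Then K |=_lin psi says that G D holds at 0 for
   a marker-free D, and separating once more at 0, where every strict past
   formula is false, yields a pure future formula, i.e. an LTL formula.
   Separation itself goes by Gabbay's elimination: a since formula S(a, b) is
   a flip-flop set by a and kept by ~ a /\ b, so under a future operator it
   is determined by its current value and by future formulas in a and b. *)

(** * Temporal logic with strict until and since *)

(* [FUntil true g h] is Gabbay's strict until U(g, h): [g] holds at some later
   point and [h] everywhere strictly in between; [FUntil false g h] is its
   mirror image, the strict since S(g, h). *)
Inductive form (V : Type) :=
| FTrue | FAtom of V | FNot of form V | FAnd of form V & form V | FOr of form V & form V
| FUntil of bool & form V & form V.
Arguments FTrue {V}.

Definition ltd (d : bool) (x y : nat) : bool := if d then x < y else y < x.
Definition led (d : bool) (x y : nat) : bool := if d then x <= y else y <= x.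

Definition until d (P Q : nat -> Prop) t : Prop :=
  exists s, ltd d t s /\ P s /\ forall r, ltd d t r -> ltd d r s -> Q r.

Definition since d (P Q : nat -> Prop) h : Prop :=
  exists s, ltd d s h /\ P s /\ forall r, ltd d s r -> ltd d r h -> Q r.

Fixpoint sat (V : Type) (w : nat -> V -> Prop) (f : form V) : nat -> Prop :=
  match f with
  | FTrue => fun _ => True
  | FAtom a => fun t => w t a
  | FNot g => fun t => ~ sat w g t
  | FAnd g h => fun t => sat w g t /\ sat w h t
  | FOr g h => fun t => sat w g t \/ sat w h t
  | FUntil d g h => until d (sat w g) (sat w h)
  end.

Ltac dlia := unfold led, ltd in *;
  repeat match goal with
  | H : context [if ?d then _ else _] |- _ => is_var d; destruct d
  | |- context [if ?d then _ else _] => is_var d; destruct d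
  end; simpl in *; lia.

Lemma until_ext d (P Q P' Q' : nat -> Prop) t :
  (forall s, ltd d t s -> (P s <-> P' s)) -> (forall s, ltd d t s -> (Q s <-> Q' s)) ->
  (until d P Q t <-> until d P' Q' t).
Proof.
move=> EP EQ; split=> -[s [ts [Ps Qs]]]; exists s; do !split => //.
- exact/EP.
- by move=> r tr rs; apply/EQ => //; apply: Qs.
- exact/EP.
- by move=> r tr rs; apply/EQ => //; apply: Qs.
Qed.

Lemma until_negb d P Q h : until (~~ d) P Q h <-> since d P Q h.
Proof.
have E x y : ltd (~~ d) x y = ltd d y x by case: d.
split=> -[s [hs [Ps H]]]; exists s; rewrite E in hs *; split => //; split => // r r1 r2.
- by apply: H; rewrite E.
- by apply: H; move: r1 r2; rewrite !E.
Qed.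

Lemma ltd_trichotomy d x y : ltd d x y \/ x = y \/ ltd d y x.
Proof. rewrite /ltd; case: d; lia. Qed.

Lemma ex_maxn_below (P : nat -> Prop) n : (exists u, u < n /\ P u) ->
  exists u, [/\ u < n, P u & forall v, u < v -> v < n -> ~ P v].
Proof.
elim: n => [|n IH] [u [un Pu]]; first by [].
case: (classic (P n)) => Pn; first by exists n; split => // v; lia.
have [|u' [u'n Pu' Hmax]] := IH.
  have un' : u <> n by move=> E; subst.
  by exists u; split => //; lia.
exists u'; split => // [|v u'v vn]; first lia.
by case: (v =P n) => [->|ne] //; apply: Hmax => //; lia.
Qed.

Lemma ex_minn_prop (P : nat -> Prop) : (exists u, P u) ->
  exists u, P u /\ forall v, v < u -> ~ P v.
Proof.
move=> [u Pu]; elim: u {-2}u (leqnn u) Pu => [|n IH] u un Pu.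
  by exists u; split => // v; lia.
case: (classic (exists v, v < u /\ P v)) => [[v [vu Pv]]|H].
  by apply: (IH v) => //; lia.
by exists u; split => // v vu Pv; apply: H; exists v.
Qed.

Lemma ltd_last d (P : nat -> Prop) h : (exists u, ltd d u h /\ P u) ->
  exists u, [/\ ltd d u h, P u & forall v, ltd d u v -> ltd d v h -> ~ P v].
Proof.
case: d => /= H; first exact: ex_maxn_below.
have [u [[hu Pu] Hmin]] : exists u, (h < u /\ P u) /\ forall v, v < u -> ~ (h < v /\ P v).
  by apply: ex_minn_prop; case: H => u [hu Pu]; exists u.
by exists u; split => // v uv vh Pv; apply: (Hmin v uv).
Qed.

Lemma reach_iff_until d (tgt hold : nat -> Prop) t :
  (exists L, [/\ led d t L, tgt L & forall u, led d t u -> ltd d u L -> hold u]) <->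
  tgt t \/ (hold t /\ until d tgt hold t).
Proof.
split.
- move=> [L [tL tgL H]]; case: (ltd_trichotomy d t L) => [tL'|[E|Lt]].
  + right; split; first by apply: H => //; dlia.
    by exists L; split => //; split => // r tr rL; apply: H => //; dlia.
  + by subst; left.
  + exfalso; dlia.
- case=> [tg|[ht [s [ts [tgs H]]]]].
    by exists t; split => //; [dlia|move=> u tu ut; dlia].
  exists s; split => //; first dlia; move=> u tu us.
  by case: (ltd_trichotomy d t u) => [tu'|[E|ut]]; [exact: H|subst|exfalso; dlia].
Qed.

(** * The flip-flop behind a since formula *)

Definition cond (M X1 X0 : nat -> Prop) r := (M r /\ X1 r) \/ (~ M r /\ X0 r).

Lemma cond_on M X1 X0 r : M r -> (cond M X1 X0 r <-> X1 r).
Proof. rewrite /cond; tauto. Qed.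

Lemma cond_off M X1 X0 r : ~ M r -> (cond M X1 X0 r <-> X0 r).
Proof. rewrite /cond; tauto. Qed.

Lemma cond_const M X1 X0 r (m : bool) :
  (M r <-> m) -> (cond M X1 X0 r <-> (if m then X1 else X0) r).
Proof. by case: m => E; [apply: cond_on; apply/E | apply: cond_off => /E]. Qed.

Section FlipFlop.
Variables (d : bool) (a b : nat -> Prop).

Definition keep v := ~ a v /\ b v.

(* The state at [h] of the flip-flop started at [t] in state [m] which [a]
   sets, [~ a /\ ~ b] resets, and [keep] leaves unchanged; it depends on the
   points from [t] up to, but excluding, [h]. *)
Definition flipflop (m : Prop) t h :=
  (exists u, [/\ led d t u, ltd d u h, a u & forall v, ltd d u v -> ltd d v h -> keep v]) \/
  (m /\ forall v, led d t v -> ltd d v h -> keep v).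

Lemma flipflop_iff (m m' : Prop) t h : (m <-> m') -> (flipflop m t h <-> flipflop m' t h).
Proof. by move=> E; rewrite /flipflop E. Qed.

Lemma flipflop_kept (m : Prop) t r : ltd d t r ->
  (forall v, led d t v -> ltd d v r -> keep v) -> (flipflop m t r <-> m).
Proof.
move=> tr Kall; split; last by move=> mm; right.
by case=> [[u [tu ur au _]]|[]] //; case: (Kall u tu ur).
Qed.

Lemma flipflop_set {m : Prop} t u r : led d t u -> ltd d u r -> a u ->
  (forall v, ltd d u v -> ltd d v r -> keep v) -> flipflop m t r.
Proof. by move=> tu ur au Ku; left; exists u. Qed.

Lemma flipflop_reset {m : Prop} t u r : led d t u -> ltd d u r -> ~ a u -> ~ keep u ->
  (forall v, ltd d u v -> ltd d v r -> keep v) -> ~ flipflop m t r.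
Proof.
move=> tu ur nau nKu Ku [[u' [tu' u'r au' Ku']]|[_ Kall]]; last exact/nKu/Kall.
case: (ltd_trichotomy d u' u) => [u'u|[E|uu']]; first exact/nKu/Ku'.
- by subst.
- by case: (Ku u' uu' u'r).
Qed.

Lemma flipflop_after_switch {m : Prop} t L r : led d t L -> ltd d L r -> ~ keep L ->
  (forall v, ltd d L v -> ltd d v r -> keep v) -> (flipflop m t r <-> a L).
Proof.
move=> tL Lr nKL KL; split=> [F|aL]; last exact: flipflop_set aL KL.
by apply: NNPP => naL; apply: (flipflop_reset tL Lr naL nKL KL F).
Qed.

Lemma flipflop_restart (m : Prop) t s h : ltd d t s -> ltd d s h ->
  (flipflop m t h <-> flipflop (flipflop m t s) s h).
Proof.
move=> ts sh; split.
- move=> [[u [tu uh au Ku]]|[mm Kt]].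
    case: (ltd_trichotomy d u s) => [us|[E|su]].
    + right; split; first by apply: (flipflop_set tu us au) => v uv vs; apply: Ku => //; dlia.
      by move=> v sv vh; apply: Ku => //; dlia.
    + by subst; left; exists s; split => //; dlia.
    + by left; exists u; split => //; dlia.
  right; split; first by right; split => // v tv vs; apply: Kt => //; dlia.
  by move=> v sv vh; apply: Kt => //; dlia.
- move=> [[u [su uh au Ku]]|[[[u [tu us au Ku]]|[mm Kt]] Kh]].
  + by left; exists u; split => //; dlia.
  + left; exists u; split => //; first dlia.
    move=> v uv vh; have [vs|sv] := boolP (ltd d v s); first exact: Ku.
    by apply: Kh => //; dlia.
  + right; split => // v tv vh; have [vs|sv] := boolP (ltd d v s); first exact: Kt.
    by apply: Kh => //; dlia.
Qed.

Lemma since_flipflop t h : ltd d t h -> (since d a b h <-> flipflop (since d a b t) t h).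
Proof.
move=> th; split.
- move=> [s [sh [As Bs]]].
  case: (classic (exists u, ltd d u h /\ (led d t u /\ a u))) => [Hex|Hno].
    have [u [uh [tu au] Hmax]] := ltd_last Hex.
    left; exists u; split => // v uv vh.
    have nav : ~ a v by move=> av; apply: (Hmax v uv vh); split => //; dlia.
    split => //; apply: Bs => //.
    case: (ltd_trichotomy d u s) => [us|[E|su]]; [|by subst|dlia].
    by exfalso; apply: (Hmax s us sh); split => //; dlia.
  have st : ltd d s t.
    case: (ltd_trichotomy d s t) => [//|[E|ts]]; exfalso; apply: Hno.
    + by subst; exists t; split => //; split => //; dlia.
    + by exists s; split => //; split => //; dlia.
  right; split; first by exists s; split => //; split => // r sr rt; apply: Bs => //; dlia.
  move=> v tv vh; split; first by move=> av; apply: Hno; exists v.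
  by apply: Bs => //; dlia.
- move=> [[u [tu uh au Ku]]|[[s [st [As Bs]]] Kt]].
    by exists u; split => //; split => // r ur rh; case: (Ku r ur rh).
  exists s; split; first dlia; split => // r sr rh.
  case: (ltd_trichotomy d r t) => [rt|[E|tr]]; first exact: Bs.
  + by subst; case: (Kt t (ltac:(dlia)) rh).
  + by case: (Kt r (ltac:(dlia)) rh).
Qed.

Definition kuntil (P Q : nat -> Prop) := until d P (fun r => Q r /\ keep r).
Definition unbroken (Q : nat -> Prop) u := ~ until d (fun r => ~ Q r) keep u.
Definition switches (P1 Q1 P0 Q0 : nat -> Prop) L :=
  ~ keep L /\ ((a L /\ kuntil P1 Q1 L) \/ ((~ a L /\ ~ b L) /\ kuntil P0 Q0 L)).
Definition guarded (Q1 Q0 : nat -> Prop) u :=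
  keep u \/ ((~ a u \/ unbroken Q1 u) /\ (~ (~ a u /\ ~ b u) \/ unbroken Q0 u)).

Lemma kuntil_ext P Q P' Q' L :
  (forall s, ltd d L s -> (forall v, ltd d L v -> ltd d v s -> keep v) ->
     (P s <-> P' s) /\ (Q s <-> Q' s)) ->
  (kuntil P Q L <-> kuntil P' Q' L).
Proof.
move=> E.
have Kbelow (R : nat -> Prop) s r : (forall v, ltd d L v -> ltd d v s -> R v /\ keep v) ->
    led d r s -> forall v, ltd d L v -> ltd d v r -> keep v.
  by move=> H rs v Lv vr; have /(H v Lv) [] : ltd d v s by dlia.
split=> -[s [Ls [Ps H]]]; exists s; split => //;
  have [EP _] := E s Ls (Kbelow _ s s H ltac:(dlia)); split; try by apply/EP.
- move=> r Lr rs; have [Qr Kr] := H r Lr rs.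
  by have [_ EQ] := E r Lr (Kbelow _ s r H ltac:(dlia)); split => //; apply/EQ.
- move=> r Lr rs; have [Qr Kr] := H r Lr rs.
  by have [_ EQ] := E r Lr (Kbelow _ s r H ltac:(dlia)); split => //; apply/EQ.
Qed.

Lemma led_of_kept u L r : ltd d u L -> ~ keep L ->
  (forall v, ltd d u v -> ltd d v r -> keep v) -> led d r L.
Proof.
move=> uL nKL K; case: (boolP (led d r L)) => // /negP nrL.
by exfalso; apply/nKL/K => //; dlia.
Qed.

Lemma guarded_of_cond (m : bool) t L Q1 Q0 : led d t L -> ~ keep L ->
  (forall r, ltd d t r -> led d r L -> cond (flipflop m t) Q1 Q0 r) ->
  (~ keep t \/ unbroken (if m then Q1 else Q0) t) /\
  (forall u, led d t u -> ltd d u L -> guarded Q1 Q0 u).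
Proof.
move=> tL nKL HQ; split.
  case: (classic (keep t)) => Kt; [right|by left].
  move=> [r [tr [nQ Kr]]]; apply: nQ.
  have tL' : ltd d t L by case: (ltd_trichotomy d t L) => [|[E|]] //; [subst|dlia].
  have Kall v : led d t v -> ltd d v r -> keep v.
    by case: (ltd_trichotomy d t v) => [tv' _|[<-|vt tv]] //; [exact: Kr|dlia].
  by rewrite -(cond_const _ _ (flipflop_kept m tr Kall)); apply: HQ tr (led_of_kept tL' nKL Kr).
move=> u tu uL; case: (classic (keep u)) => Ku; [by left|right; split].
- case: (classic (a u)) => au; [right|by left].
  move=> [r [ur [nQ Kr]]]; apply: nQ.
  rewrite -(cond_on _ _ (flipflop_set tu ur au Kr)).
  by apply: HQ (led_of_kept uL nKL Kr); dlia.
- case: (classic (a u)) => au; [by left; case|right].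
  move=> [r [ur [nQ Kr]]]; apply: nQ.
  rewrite -(cond_off _ _ (flipflop_reset tu ur au Ku Kr)).
  by apply: HQ (led_of_kept uL nKL Kr); dlia.
Qed.

Lemma cond_of_guarded (m : bool) t L Q1 Q0 r : ltd d t r -> led d r L ->
  (~ keep t \/ unbroken (if m then Q1 else Q0) t) ->
  (forall u, led d t u -> ltd d u L -> guarded Q1 Q0 u) ->
  cond (flipflop m t) Q1 Q0 r.
Proof.
move=> tr rL Ht Hu.
case: (classic (exists v, ltd d v r /\ (led d t v /\ ~ keep v))) => [Hex|Hno].
  have [u [ur [tu nKu] Hmax]] := ltd_last Hex.
  have Ku v : ltd d u v -> ltd d v r -> keep v.
    by move=> uv vr; apply: NNPP => nK; apply: (Hmax v uv vr); split => //; dlia.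
  have [//|[C1 C0]] := Hu u tu ltac:(dlia).
  case: (classic (a u)) => au.
    rewrite cond_on; last exact: flipflop_set tu ur au Ku.
    by apply: NNPP => nQ; case: C1 => // -[]; exists r.
  rewrite cond_off; last exact: flipflop_reset tu ur au nKu Ku.
  apply: NNPP => nQ; case: C0 => [[]|[]]; last by exists r.
  by split => // bu; apply: nKu.
have Kall v : led d t v -> ltd d v r -> keep v.
  by move=> tv vr; apply: NNPP => nK; apply: Hno; exists v.
rewrite (cond_const _ _ (flipflop_kept m tr Kall)); apply: NNPP => nQ.
case: Ht => [[]|[]]; first by apply: Kall => //; dlia.
by exists r; split => //; split => // v tv vr; apply: Kall => //; dlia.
Qed.

Lemma kuntil_cond_kept (m : bool) t P1 P0 Q1 Q0 : keep t ->
  (kuntil (if m then P1 else P0) (if m then Q1 else Q0) t <->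
   kuntil (cond (flipflop m t) P1 P0) (cond (flipflop m t) Q1 Q0) t).
Proof.
move=> Kt; apply: kuntil_ext => s ts Ks.
have Kall r : ltd d t r -> led d r s -> forall v, led d t v -> ltd d v r -> keep v.
  move=> tr rs v tv vr; case: (ltd_trichotomy d t v) => [tv'|[<-|]] //; last dlia.
  by apply: Ks => //; dlia.
by rewrite !(cond_const _ _ (flipflop_kept m ts (Kall s ts _))) //; dlia.
Qed.

Lemma switches_iff (m : Prop) t L P1 Q1 P0 Q0 : led d t L -> ~ keep L ->
  (switches P1 Q1 P0 Q0 L <-> kuntil (cond (flipflop m t) P1 P0) (cond (flipflop m t) Q1 Q0) L).
Proof.
move=> tL nKL; have nbL : ~ a L -> ~ b L by move=> naL bL; apply: nKL.
case: (classic (a L)) => aL.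
- rewrite /switches; apply: (@iff_trans _ (kuntil P1 Q1 L)); first tauto.
  apply: kuntil_ext => s Ls Ks; rewrite !cond_on //;
    by apply/(flipflop_after_switch tL Ls nKL Ks).
- rewrite /switches; apply: (@iff_trans _ (kuntil P0 Q0 L)); first tauto.
  apply: kuntil_ext => s Ls Ks; rewrite !cond_off //;
    by move/(flipflop_after_switch tL Ls nKL Ks).
Qed.

(* Up to its witness, the flip-flop either never changes (first disjunct) or
   switches a last time at some [L]: then [switches] describes the stretch
   after [L], and [guarded] says that no [Q] fails before it. *)
Lemma until_cond_flipflop (m : bool) t P1 P0 Q1 Q0 :
  until d (cond (flipflop m t) P1 P0) (cond (flipflop m t) Q1 Q0) t <->
  (keep t /\ kuntil (if m then P1 else P0) (if m then Q1 else Q0) t) \/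
  ((~ keep t \/ unbroken (if m then Q1 else Q0) t) /\
   exists L, [/\ led d t L, switches P1 Q1 P0 Q0 L &
                 forall u, led d t u -> ltd d u L -> guarded Q1 Q0 u]).
Proof.
split.
- move=> [s [ts [Ps Qs]]].
  case: (classic (exists v, ltd d v s /\ (led d t v /\ ~ keep v))) => [Hex|Hno].
    have [L [Ls [tL nKL] Hmax]] := ltd_last Hex.
    have KL v : ltd d L v -> ltd d v s -> keep v.
      by move=> Lv vs; apply: NNPP => nK; apply: (Hmax v Lv vs); split => //; dlia.
    have [|Ht Hu] := guarded_of_cond (m := m) tL nKL (Q1 := Q1) (Q0 := Q0).
      by move=> r tr rL; apply: Qs => //; dlia.
    right; split => //; exists L; split => //; rewrite (@switches_iff m t L P1 Q1 P0 Q0 tL nKL).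
    by exists s; split => //; split => // r Lr rs; split; [apply: Qs => //; dlia|exact: KL].
  have Kt v : led d t v -> ltd d v s -> keep v.
    by move=> tv vs; apply: NNPP => nK; apply: Hno; exists v.
  left; split; first by apply: Kt => //; dlia.
  rewrite kuntil_cond_kept; last by apply: Kt => //; dlia.
  by exists s; split => //; split => // r tr rs; split; [exact: Qs|apply: Kt => //; dlia].
- case=> [[Kt]|[Ht [L [tL [nKL Sw] Hu]]]].
    rewrite kuntil_cond_kept // => -[s [ts [Ps Qs]]].
    by exists s; split => //; split => // r tr rs; case: (Qs r tr rs).
  have : switches P1 Q1 P0 Q0 L by split.
  rewrite (@switches_iff m t L P1 Q1 P0 Q0 tL nKL) => -[s [Ls [Ps Qs]]].
  exists s; split; first dlia; split => // r tr rs.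
  case: (boolP (led d r L)) => [rL|/negP nrL]; first exact: cond_of_guarded rL Ht Hu.
  by case: (Qs r) => //; dlia.
Qed.

End FlipFlop.

(** * Eliminating a since atom from a pure formula *)

Fixpoint atoms X (f : form X) : list X :=
  match f with
  | FTrue => nil
  | FAtom a => a :: nil
  | FNot g => atoms g
  | FAnd g h | FOr g h | FUntil _ g h => List.app (atoms g) (atoms h)
  end.

Fixpoint pure X (d : bool) (f : form X) : bool :=
  match f with
  | FUntil d' g h => (d' == d) && pure d g && pure d h
  | FNot g => pure d g
  | FAnd g h | FOr g h => pure d g && pure d h
  | _ => true
  end.

Fixpoint prop X (f : form X) : bool :=
  match f with
  | FUntil _ _ _ => false
  | FNot g => prop g
  | FAnd g h | FOr g h => prop g && prop h
  | _ => true
  end.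

Fixpoint depth X (f : form X) : nat :=
  match f with
  | FUntil _ g h => (maxn (depth g) (depth h)).+1
  | FNot g => depth g
  | FAnd g h | FOr g h => maxn (depth g) (depth h)
  | _ => 0
  end.

Lemma pure_other X e d (z : form X) : pure e z -> pure (~~ d) z = false -> pure d z.
Proof. by case: e d => -[] // pz; rewrite pz. Qed.

Section FlipFlopForm.
Variables (X : Type) (d : bool) (a b : X).

(* The right-hand side of [until_cond_flipflop] for the flip-flop driven by
   the atoms [a] and [b]; its [exists L] is a non-strict until, expanded by
   [reach_iff_until]. *)
Definition until_flipflop_form (g h : bool -> form X) (m : bool) : form X :=
  let A := FAtom a in let B := FAtom b in
  let K := FAnd (FNot A) B in let R := FAnd (FNot A) (FNot B) in
  let kU P Q := FUntil d P (FAnd Q K) in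
  let unbroken Q := FNot (FUntil d (FNot Q) K) in
  let switch :=
    FAnd (FNot K) (FOr (FAnd A (kU (g true) (h true))) (FAnd R (kU (g false) (h false)))) in
  let guarded :=
    FOr K (FAnd (FOr (FNot A) (unbroken (h true))) (FOr (FNot R) (unbroken (h false)))) in
  FOr (FAnd K (kU (g m) (h m)))
      (FAnd (FOr (FNot K) (unbroken (h m))) (FOr switch (FAnd guarded (FUntil d switch guarded)))).

Lemma sat_until_flipflop_form val (g h : bool -> form X) (m : bool) t :
  let M := flipflop d (fun r => val r a) (fun r => val r b) m t in
  sat val (until_flipflop_form g h m) t <->
  until d (cond M (sat val (g true)) (sat val (g false)))
          (cond M (sat val (h true)) (sat val (h false))) t.
Proof.
cbv zeta; rewrite until_cond_flipflop; case: m; apply: or_iff_compat_l; apply: and_iff_compat_l;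
  symmetry; apply: reach_iff_until.
Qed.

Lemma pure_until_flipflop_form (g h : bool -> form X) m :
  (forall m, pure d (g m)) -> (forall m, pure d (h m)) -> pure d (until_flipflop_form g h m).
Proof. by move=> pg ph; rewrite /= !eqxx !pg !ph. Qed.

Lemma atoms_until_flipflop_form (g h : bool -> form X) m y :
  List.In y (atoms (until_flipflop_form g h m)) ->
  y = a \/ y = b \/ exists m', List.In y (atoms (g m')) \/ List.In y (atoms (h m')).
Proof.
rewrite /until_flipflop_form; cbn [atoms]; rewrite !List.in_app_iff; cbn [List.In].
by case: m; intuition (subst; eauto).
Qed.

End FlipFlopForm.

Section SinceAtom.
Variables (X : Type) (d : bool) (x a b : X).

Definition follows (val : nat -> X -> Prop) (m : bool) t :=
  (val t x <-> m) /\
  forall h, ltd d t h -> (val h x <-> flipflop d (fun r => val r a) (fun r => val r b) m t h).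

Lemma follows_restart val (m : bool) t s (m' : bool) :
  follows val m t -> ltd d t s -> (val s x <-> m') -> follows val m' s.
Proof.
move=> [_ F] ts E; split => // h sh.
rewrite F; last by dlia.
rewrite (flipflop_restart _ _ _ ts sh); apply: flipflop_iff.
by rewrite -E; symmetry; apply: F.
Qed.

Lemma sat_follows_cond val (m : bool) t s (g : form X) (c : bool -> form X) :
  follows val m t -> ltd d t s ->
  (forall val m t, follows val m t -> (sat val g t <-> sat val (c m) t)) ->
  (sat val g s <-> cond (flipflop d (fun r => val r a) (fun r => val r b) m t)
                        (sat val (c true)) (sat val (c false)) s).
Proof.
move=> F ts Sc; have [_ Fs] := F.
case: (classic (val s x)) => xs.
  rewrite cond_on; last exact/(Fs s ts).
  by apply: Sc; apply: follows_restart F ts _.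
rewrite cond_off; last by move/(Fs s ts).
by apply: Sc; apply: follows_restart F ts _.
Qed.

Lemma since_atom_elim (chi : form X) : pure d chi ->
  exists c : bool -> form X, [/\ forall m, pure d (c m),
    forall m y, List.In y (atoms (c m)) -> y = a \/ y = b \/ (List.In y (atoms chi) /\ y <> x) &
    forall val m t, follows val m t -> (sat val chi t <-> sat val (c m) t)].
Proof.
elim: chi => [|y|g IH|g IHg h IHh|g IHg h IHh|d' g IHg h IHh] /=.
- by exists (fun=> FTrue).
- move=> _; case: (classic (y = x)) => [->|yx].
    exists (fun m => if m then FTrue else FNot FTrue); split; [by case|by case|].
    by move=> val [] t [E _] /=; [split => // _; apply/E|split => // /E].
  by exists (fun=> FAtom y); split => // m z /= [<-|[]]; right; right; split => //; left.
- move=> /IH [c [pc Ac Sc]]; exists (fun m => FNot (c m)); split => // val m t F.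
  by rewrite /= (Sc _ _ _ F).
- move=> /andP[/IHg [c [pc Ac Sc]] /IHh [e [pe Ae Se]]].
  exists (fun m => FAnd (c m) (e m)); split => [m|m z|val m t F]; first by rewrite /= pc pe.
    by rewrite /= !List.in_app_iff => -[/Ac|/Ae]; tauto.
  by rewrite /= (Sc _ _ _ F) (Se _ _ _ F).
- move=> /andP[/IHg [c [pc Ac Sc]] /IHh [e [pe Ae Se]]].
  exists (fun m => FOr (c m) (e m)); split => [m|m z|val m t F]; first by rewrite /= pc pe.
    by rewrite /= !List.in_app_iff => -[/Ac|/Ae]; tauto.
  by rewrite /= (Sc _ _ _ F) (Se _ _ _ F).
- move=> /andP[/andP[/eqP -> /IHg [c [pc Ac Sc]]] /IHh [e [pe Ae Se]]].
  exists (until_flipflop_form d a b c e); split => [m|m z|val m t F].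
  + exact: pure_until_flipflop_form.
  + move=> H; have {}H := atoms_until_flipflop_form H; rewrite List.in_app_iff.
    by case: H => [|[|[m' [/Ac|/Ae]]]]; tauto.
  + rewrite sat_until_flipflop_form; apply: until_ext => s ts; exact: sat_follows_cond F ts _.
Qed.

End SinceAtom.

(** * Gabbay's separation theorem *)

Fixpoint bind X Y (f : form X) (s : X -> form Y) : form Y :=
  match f with
  | FTrue => FTrue
  | FAtom a => s a
  | FNot g => FNot (bind g s)
  | FAnd g h => FAnd (bind g s) (bind h s)
  | FOr g h => FOr (bind g s) (bind h s)
  | FUntil d g h => FUntil d (bind g s) (bind h s)
  end.

Lemma sat_bind X Y (f : form X) (s : X -> form Y) w t :
  sat w (bind f s) t <-> sat (fun h a => sat w (s a) h) f t.
Proof.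
elim: f t => //= [g IH|g IHg h IHh|g IHg h IHh|d g IHg h IHh] t.
- by rewrite IH.
- by rewrite IHg IHh.
- by rewrite IHg IHh.
- by apply: until_ext => s' _; [apply: IHg|apply: IHh].
Qed.

Lemma sat_ext X (f : form X) (w1 w2 : nat -> X -> Prop) :
  (forall h a, List.In a (atoms f) -> (w1 h a <-> w2 h a)) -> forall t, sat w1 f t <-> sat w2 f t.
Proof.
elim: f => //= [a|g IH|g IHg h IHh|g IHg h IHh|d g IHg h IHh] E t.
- by apply: E; left.
- by rewrite IH.
- by rewrite IHg ?IHh // => h' a' H; apply: E; rewrite List.in_app_iff; tauto.
- by rewrite IHg ?IHh // => h' a' H; apply: E; rewrite List.in_app_iff; tauto.
- by apply: until_ext => s' _; [apply: IHg|apply: IHh] => h' a' H; apply: E;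
    rewrite List.in_app_iff; tauto.
Qed.

Lemma prop_sat_local X (f : form X) (w1 w2 : nat -> X -> Prop) t : prop f ->
  (forall a, List.In a (atoms f) -> (w1 t a <-> w2 t a)) -> (sat w1 f t <-> sat w2 f t).
Proof.
elim: f => [|a|g IH|g IHg h IHh|g IHg h IHh|d g IHg h IHh] //= pf E.
- by apply: E; left.
- by rewrite IH.
- 1,2: by case/andP: pf => pg ph; rewrite IHg ?IHh // => a Ha; apply: E;
    rewrite List.in_app_iff; tauto.
Qed.

Lemma atoms_bind X Y (f : form X) (s : X -> form Y) y :
  List.In y (atoms (bind f s)) -> exists2 a, List.In a (atoms f) & List.In y (atoms (s a)).
Proof.
elim: f => [|a|g IH|g IHg h IHh|g IHg h IHh|d g IHg h IHh] //=; first by exists a => //; left.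
all: rewrite ?List.in_app_iff => -[/IHg|/IHh] [a H1 H2]; exists a => //;
  rewrite List.in_app_iff; tauto.
Qed.

Lemma pure_bind X Y d (f : form X) (s : X -> form Y) :
  pure d f -> (forall a, List.In a (atoms f) -> pure d (s a)) -> pure d (bind f s).
Proof.
elim: f => [|a|g IH|g IHg h IHh|g IHg h IHh|d' g IHg h IHh] //=.
- by move=> _; apply; left.
- 1,2: by move=> /andP[pg ph] H; rewrite IHg ?IHh // => a Ha; apply: H;
    rewrite List.in_app_iff; tauto.
- by move=> /andP[/andP[-> pg] ph] H; rewrite IHg ?IHh // => a Ha; apply: H;
    rewrite List.in_app_iff; tauto.
Qed.

Lemma prop_pure X d (f : form X) : prop f -> pure d f.
Proof.
by elim: f => [|a|g IH|g IHg h IHh|g IHg h IHh|d' g IHg h IHh] //= /andP[/IHg -> /IHh ->].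
Qed.

Lemma depth0_prop X (f : form X) : depth f <= 0 -> prop f.
Proof.
elim: f => [|a|g IH|g IHg h IHh|g IHg h IHh|d' g IHg h IHh] //=;
  by rewrite geq_max => /andP[/IHg -> /IHh ->].
Qed.

Definition fval V (w : nat -> V -> Prop) : nat -> form V -> Prop := fun h z => sat w z h.

Fixpoint skeleton V (z : form V) : form (form V) :=
  match z with
  | FTrue => FTrue
  | FAtom v => FAtom (FAtom v)
  | FNot g => FNot (skeleton g)
  | FAnd g h => FAnd (skeleton g) (skeleton h)
  | FOr g h => FOr (skeleton g) (skeleton h)
  | FUntil d g h => FAtom (FUntil d g h)
  end.

Lemma sat_skeleton V (z : form V) w h : sat (fval w) (skeleton z) h <-> sat w z h.
Proof.
elim: z h => [|a|g IH|g IHg h IHh|g IHg h IHh|d' g IHg h IHh] h' //=.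
- by rewrite IH.
- by rewrite IHg IHh.
- by rewrite IHg IHh.
Qed.

Lemma prop_skeleton V (z : form V) : prop (skeleton z).
Proof. by elim: z => [|a|g IH|g IHg h IHh|g IHg h IHh|d' g IHg h IHh] //=; rewrite IHg IHh. Qed.

Lemma atoms_skeleton V e (z : form V) y : List.In y (atoms (skeleton z)) -> pure e z ->
  [/\ pure e y, depth y <= depth z & depth y = 0 \/ exists A B, y = FUntil e A B].
Proof.
elim: z => [|v|g IH|g IHg h IHh|g IHg h IHh|d g IHg h IHh] //=.
- by move=> [<-|[]] _; split => //; left.
- 1,2: rewrite List.in_app_iff => -[/IHg H /andP[/H [? ? ?] _]|/IHh H /andP[_ /H [? ? ?]]];
    split => //; lia.
- move=> [<-|[]] /andP[/andP[/eqP -> pg] ph].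
  by split; [rewrite /= eqxx pg ph|by []|right; exists g, h].
Qed.

Definition separated V (rho : form (form V)) :=
  prop rho /\ forall z, List.In z (atoms rho) -> exists e, pure e z.

Definition separable V (phi : form V) :=
  exists2 rho : form (form V), separated rho & forall w t, sat w phi t <-> sat (fval w) rho t.

Definition separable_over V (chi : form (form V)) :=
  exists2 rho : form (form V), separated rho &
    forall w t, sat (fval w) chi t <-> sat (fval w) rho t.

Lemma separable_over_pure_prop V d (chi : form (form V)) : pure d chi ->
  (forall z, List.In z (atoms chi) -> prop z) -> separable_over chi.
Proof.
move=> pc Hp; exists (FAtom (bind chi id)) => [|w t]; last by rewrite /= /fval sat_bind.
split => // z [<-|[]]; exists d; apply: pure_bind => // a Ha; exact/prop_pure/Hp.
Qed.

Lemma follows_since V d (A B : form V) w t (m : bool) :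
  (sat w (FUntil (~~ d) A B) t <-> m) ->
  follows d (FUntil (~~ d) A B) A B (fval w) m t.
Proof.
move=> E; split => // h th; rewrite /fval [sat _ _ _]until_negb (since_flipflop _ _ th).
by apply: flipflop_iff; rewrite -E /= until_negb.
Qed.

Lemma since_atom_split V d (chi : form (form V)) A B : pure d chi ->
  let z := FUntil (~~ d) A B in
  exists c : bool -> form (form V), [/\ forall m, pure d (c m),
    forall m y, List.In y (atoms (c m)) -> y = A \/ y = B \/ (List.In y (atoms chi) /\ y <> z) &
    forall w t, sat (fval w) chi t <->
                cond (sat w z) (sat (fval w) (c true)) (sat (fval w) (c false)) t].
Proof.
move=> pc z; have [c [pc' Ac Sc]] := since_atom_elim z A B pc.
exists c; split => // w t; case: (classic (sat w z t)) => zt.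
  by rewrite cond_on //; apply/Sc/follows_since.
by rewrite cond_off //; apply/Sc/follows_since.
Qed.

Section SeparationStep.
Variables (V : Type) (d : bool) (n : nat).
Hypothesis separable_depth_n : forall chi : form (form V), pure d chi ->
  (forall z, List.In z (atoms chi) -> pure (~~ d) z /\ depth z <= n) -> separable_over chi.

Definition shallow_or_since (z : form V) := pure (~~ d) z /\
  (depth z <= n \/ exists A B, [/\ z = FUntil (~~ d) A B, depth A <= n & depth B <= n]).

(* Induction on a list [L] containing the atoms of depth [n.+1], each a since
   formula, which [since_atom_split] removes one at a time. *)
Lemma separable_over_shallow_or_since L (chi : form (form V)) : pure d chi ->
  (forall z, List.In z (atoms chi) -> shallow_or_since z) ->
  (forall z, List.In z (atoms chi) -> ~ depth z <= n -> List.In z L) -> separable_over chi.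
Proof.
elim: L chi => [|z0 L IHL] chi pc Hs HL.
  apply: separable_depth_n pc _ => z Hz; have [pz _] := Hs z Hz.
  by split => //; apply: NNPP => /(HL z Hz).
case: (classic (List.In z0 (atoms chi) /\ ~ depth z0 <= n)) => [[Hin Hb]|Hno]; last first.
  apply: IHL pc Hs _ => z Hz nd; case: (HL z Hz nd) => [E|//]; subst.
  by exfalso; apply: Hno.
case: (Hs z0 Hin) => pz0 [//|[A [B [E dA dB]]]]; subst z0.
have [c [pc' Ac Sc]] := since_atom_split A B pc.
have [pA pB] : pure (~~ d) A /\ pure (~~ d) B by case/andP: pz0 => /andP[].
have Hc m : separable_over (c m).
  apply: IHL (pc' m) _ _ => y /Ac.
    by case=> [->|[->|[/Hs //]]]; split => //; left.
  case=> [->|[->|[Hy ne]]] nd; [by case: (nd dA)|by case: (nd dB)|].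
  by case: (HL y Hy nd) => // E; case: ne.
have [r1 [pr1 ar1] S1] := Hc true; have [r0 [pr0 ar0] S0] := Hc false.
set z := FUntil (~~ d) A B.
exists (FOr (FAnd (FAtom z) r1) (FAnd (FNot (FAtom z)) r0)) => [|w t].
  split; first by rewrite /= pr1 pr0.
  move=> y /=; rewrite !List.in_app_iff /=.
  by case=> [<-|[/ar1|[<-|/ar0]]] //; exists (~~ d).
by rewrite Sc /= -S1 -S0.
Qed.

End SeparationStep.

Lemma separable_over_pure V d n (chi : form (form V)) : pure d chi ->
  (forall z, List.In z (atoms chi) -> pure (~~ d) z /\ depth z <= n) -> separable_over chi.
Proof.
elim: n chi => [|n IH] chi pc Hz.
  by apply: (separable_over_pure_prop pc) => z /Hz [_ /depth0_prop].
set chi1 := bind chi (@skeleton V).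
have E1 w t : sat (fval w) chi1 t <-> sat (fval w) chi t.
  by rewrite sat_bind; apply: sat_ext => h a _; exact: sat_skeleton.
suff [rho sep S] : separable_over chi1 by exists rho => // w t; rewrite -E1.
have pc1 : pure d chi1 by apply: pure_bind pc _ => a _; exact/prop_pure/prop_skeleton.
apply: (separable_over_shallow_or_since IH (L := atoms chi1)) pc1 _ (fun z H _ => H).
move=> z Hz1; have [a /Hz [pa da] Hza] := atoms_bind Hz1.
have [pz dz [dz0|[A [B E]]]] := atoms_skeleton Hza pa.
  by split => //; left; lia.
split => //; right; exists A, B; split => //; subst z; move: dz => /=; lia.
Qed.

Lemma list_bound X (l : list X) (g : X -> nat) : exists n, forall x, List.In x l -> g x <= n.
Proof.
elim: l => [|x l [n IH]]; first by exists 0.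
by exists (maxn (g x) n) => y /= [<-|/IH]; lia.
Qed.

Lemma separable_until V d (g h : form V) : separable g -> separable h -> separable (FUntil d g h).
Proof.
move=> [r [pr ar] Sg] [r' [pr' ar'] Sh].
pose f (z : form V) := if pure (~~ d) z then FAtom z else bind z (fun v => FAtom (FAtom v)).
have fsem w z s : sat (fval w) (f z) s <-> sat w z s.
  by rewrite /f; case: ifP => _ //; rewrite sat_bind.
have fpure z : (exists e, pure e z) -> pure d (f z).
  by rewrite /f; case: ifP => // npz [e /pure_other/(_ npz) pz]; apply: pure_bind.
have fatoms z y : List.In y (atoms (f z)) -> pure (~~ d) y.
  rewrite /f; case: ifP => [pz [<-|[]] //|_ Hy].
  by have [v _ [<-|[]]] := atoms_bind Hy.
set chi := FUntil d (bind r f) (bind r' f).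
have pc : pure d chi.
  by rewrite /= eqxx !pure_bind ?prop_pure // => a Ha; apply: fpure; [apply: ar'|apply: ar].
have [n Hn] := list_bound (atoms chi) (@depth V).
have [|rho sep S] := separable_over_pure (n := n) pc.
  move=> z Hz; split; last exact: Hn.
  by move: Hz; rewrite List.in_app_iff => -[] Hz; have [a _ /fatoms] := atoms_bind Hz.
exists rho => // w t; rewrite -S /=; apply: until_ext => s _; rewrite sat_bind ?Sg ?Sh;
  by apply: sat_ext => s' a _; rewrite fsem.
Qed.

Theorem separation V (phi : form V) : separable phi.
Proof.
elim: phi => [|v|g [r [pr ar] S]|g [r [pr ar] S] h [r' [pr' ar'] S']|
              g [r [pr ar] S] h [r' [pr' ar'] S']|d g IHg h IHh].
- by exists FTrue.
- by exists (FAtom (FAtom v)) => //; split => // z [<-|[]]; exists true.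
- by exists (FNot r) => // w t /=; rewrite S.
- exists (FAnd r r') => [|w t /=]; last by rewrite S S'.
  by split; [rewrite /= pr pr'|move=> z /=; rewrite List.in_app_iff => -[/ar|/ar']].
- exists (FOr r r') => [|w t /=]; last by rewrite S S'.
  by split; [rewrite /= pr pr'|move=> z /=; rewrite List.in_app_iff => -[/ar|/ar']].
- exact: separable_until.
Qed.

(** * Moving the origin to a marked position *)

Definition Fs V (f : form V) := FUntil true f FTrue.
Definition Ps V (f : form V) := FUntil false f FTrue.
Definition Fns V (f : form V) := FOr f (Fs f).
Definition Pns V (f : form V) := FOr f (Ps f).
Definition Finit V : form V := FNot (Ps FTrue).
Arguments Fs : simpl never.
Arguments Ps : simpl never.
Arguments Fns : simpl never.
Arguments Pns : simpl never.
Arguments Finit {V} : simpl never.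

Lemma sat_Fs V w (f : form V) t : sat w (Fs f) t <-> exists s, t < s /\ sat w f s.
Proof. by split => [[s [ts [fs _]]]|[s [ts fs]]]; exists s. Qed.

Lemma sat_Ps V w (f : form V) t : sat w (Ps f) t <-> exists s, s < t /\ sat w f s.
Proof. by split => [[s [ts [fs _]]]|[s [ts fs]]]; exists s. Qed.

Lemma sat_Fns V w (f : form V) t : sat w (Fns f) t <-> exists s, t <= s /\ sat w f s.
Proof.
change (sat w f t \/ sat w (Fs f) t <-> exists s, t <= s /\ sat w f s).
rewrite sat_Fs; split=> [[H|[s [ts H]]]|[s [ts H]]].
- by exists t.
- by exists s; split => //; lia.
- by case: (ltnP t s) => h; [right; exists s|left; have -> : t = s by lia].
Qed.

Lemma sat_Pns V w (f : form V) t : sat w (Pns f) t <-> exists s, s <= t /\ sat w f s.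
Proof.
change (sat w f t \/ sat w (Ps f) t <-> exists s, s <= t /\ sat w f s).
rewrite sat_Ps; split=> [[H|[s [ts H]]]|[s [ts H]]].
- by exists t.
- by exists s; split => //; lia.
- by case: (ltnP s t) => h; [right; exists s|left; have -> : t = s by lia].
Qed.

Lemma sat_Finit V w t : sat w (@Finit V) t <-> t = 0.
Proof.
change (~ sat w (Ps FTrue) t <-> t = 0); rewrite sat_Ps; split => [|-> [s []] //].
by case: t => // t H; case: H; exists 0.
Qed.

Section Marker.
Variables (V : eqType) (q : V).

Fixpoint mark_off (z : form V) : form V :=
  match z with
  | FTrue => FTrue
  | FAtom y => if y == q then FNot FTrue else FAtom y
  | FNot g => FNot (mark_off g)
  | FAnd g h => FAnd (mark_off g) (mark_off h)
  | FOr g h => FOr (mark_off g) (mark_off h)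
  | FUntil d g h => FUntil d (mark_off g) (mark_off h)
  end.

Fixpoint mark_at (z : form V) : form V :=
  match z with
  | FTrue => FTrue
  | FAtom y => if y == q then FTrue else FAtom y
  | FNot g => FNot (mark_at g)
  | FAnd g h => FAnd (mark_at g) (mark_at h)
  | FOr g h => FOr (mark_at g) (mark_at h)
  | FUntil d g h => FUntil d (mark_off g) (mark_off h)
  end.

Variables (w : nat -> V -> Prop) (v : nat).
Hypothesis marks_v : forall h, w h q <-> h = v.

Lemma sat_mark_off d (z : form V) h : pure d z -> ltd d v h ->
  (sat w z h <-> sat w (mark_off z) h).
Proof.
elim: z h => [|y|g IH|g IHg h IHh|g IHg h IHh|d' g IHg h IHh] /= h' pz vh //.
- case: eqP => [->|//]; rewrite marks_v /=; split => // E; exfalso; subst; dlia.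
- by rewrite IH.
- by case/andP: pz => pg ph; rewrite IHg ?IHh.
- by case/andP: pz => pg ph; rewrite IHg ?IHh.
- case/andP: pz => /andP[/eqP Ed pg] ph; subst d'.
  by apply: until_ext => s hs; [apply: IHg|apply: IHh] => //; dlia.
Qed.

Lemma sat_mark_at d (z : form V) : pure d z -> (sat w z v <-> sat w (mark_at z) v).
Proof.
elim: z => [|y|g IH|g IHg h IHh|g IHg h IHh|d' g IHg h IHh] /= pz //.
- by case: eqP => [->|//]; rewrite marks_v.
- by rewrite IH.
- by case/andP: pz => pg ph; rewrite IHg ?IHh.
- by case/andP: pz => pg ph; rewrite IHg ?IHh.
- case/andP: pz => /andP[/eqP Ed pg] ph; subst d'.
  by apply: until_ext => s vs; [apply: (sat_mark_off pg)|apply: (sat_mark_off ph)].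
Qed.

End Marker.

Lemma mark_off_atoms (V : eqType) (q : V) (z : form V) : ~ List.In q (atoms (mark_off q z)).
Proof.
elim: z => [|y|g IH|g IHg h IHh|g IHg h IHh|d' g IHg h IHh] //=.
- by case: eqP => [_ []|ne [E|[]]]; apply: ne.
- 1,2,3: by rewrite List.in_app_iff; case.
Qed.

Lemma mark_at_atoms (V : eqType) (q : V) (z : form V) : ~ List.In q (atoms (mark_at q z)).
Proof.
elim: z => [|y|g IH|g IHg h IHh|g IHg h IHh|d' g IHg h IHh] //=.
- by case: eqP => [_ []|ne [E|[]]]; apply: ne.
- 1,2: by rewrite List.in_app_iff; case.
- by rewrite List.in_app_iff; case; apply: mark_off_atoms.
Qed.

(* [Pns (Finit /\ G)] holds at the marked position iff [G] holds at 0; once it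
   is separated, the marker is true at top level and false inside every pure
   future or pure past subformula. *)
Lemma marker_elim (V : eqType) (G : form V) (q : V) : exists2 D, ~ List.In q (atoms D) &
  forall w v, (forall h, w h q <-> h = v) -> (sat w G 0 <-> sat w D v).
Proof.
have [rho [prho arho] Srho] := separation (Pns (FAnd (@Finit V) G)).
exists (bind rho (mark_at q)) => [H|w v Hq]; first by have [a _ /mark_at_atoms] := atoms_bind H.
have -> : sat w G 0 <-> sat w (Pns (FAnd (@Finit V) G)) v.
  rewrite sat_Pns; split=> [HG|[s [_ H]]].
    by exists 0; split => //; split => //; apply/sat_Finit.
  have [s0 Gs] : sat w (@Finit V) s /\ sat w G s := H.
  by move/sat_Finit: s0 => E; subst.
rewrite Srho sat_bind; apply: prop_sat_local => // z /arho [e pz].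
exact: sat_mark_at pz.
Qed.

Fixpoint strip_ops V (z : form V) : form V :=
  match z with
  | FTrue => FTrue
  | FAtom y => FAtom y
  | FNot g => FNot (strip_ops g)
  | FAnd g h => FAnd (strip_ops g) (strip_ops h)
  | FOr g h => FOr (strip_ops g) (strip_ops h)
  | FUntil _ _ _ => FNot FTrue
  end.

Lemma sat_strip_ops_past V (z : form V) w : pure false z -> (sat w z 0 <-> sat w (strip_ops z) 0).
Proof.
elim: z => [|y|g IH|g IHg h IHh|g IHg h IHh|d' g IHg h IHh] //= pz.
- by rewrite IH.
- by case/andP: pz => pg ph; rewrite IHg ?IHh.
- by case/andP: pz => pg ph; rewrite IHg ?IHh.
- by case/andP: pz => /andP[/eqP -> _] _; split => // -[s [//]].
Qed.

Lemma prop_strip_ops V (z : form V) : prop (strip_ops z).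
Proof. by elim: z => [|y|g IH|g IHg h IHh|g IHg h IHh|d' g IHg h IHh] //=; rewrite IHg IHh. Qed.

(* Nothing lies strictly before 0, so at 0 the pure past parts of a separated
   formula reduce to their boolean structure. *)
Lemma future_at0 V (G : form V) : exists2 G', pure true G' & forall w, sat w G 0 <-> sat w G' 0.
Proof.
have [rho [prho arho] Srho] := separation G.
pose f (z : form V) := if pure true z then z else strip_ops z.
exists (bind rho f) => [|w].
  apply: pure_bind; first exact: prop_pure.
  by move=> z _; rewrite /f; case: ifP => // _; apply/prop_pure/prop_strip_ops.
rewrite Srho sat_bind; apply: prop_sat_local => // z /arho [e pz].
rewrite /f /fval; case: ifP => // npz.
by apply: sat_strip_ops_past; apply: pure_other pz _.
Qed.

(** * From HS to LTL *)

(* [Some (Some p)] is the proposition [p]; [Some None] and [None] mark the left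
   and the right endpoint of the current interval. *)
Definition atm (AP : finType) := option (option AP).

Definition ival (AP : finType) (lab : nat -> {set AP}) (x y : nat) : nat -> atm AP -> Prop :=
  fun h a => match a with Some (Some p) => p \in lab h | Some None => h = x | None => h = y end.

Definition MX (AP : finType) : form (atm AP) := FAtom (Some None).
Definition MY (AP : finType) : form (atm AP) := FAtom None.
Arguments MX {AP}.
Arguments MY {AP}.

Definition upd (V : eqType) (w : nat -> V -> Prop) (q : V) v : nat -> V -> Prop :=
  fun h a => if a == q then h = v else w h a.

Lemma move_marker (V : eqType) (G rel : form V) (q : V) : exists G', forall w,
  sat w G' 0 <-> exists v, sat w rel v /\ sat (upd w q v) G 0.
Proof.
have [D nD HD] := marker_elim G q.
exists (Fns (FAnd D rel)) => w; rewrite sat_Fns.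
have E v : sat w D v <-> sat (upd w q v) G 0.
  rewrite (HD (upd w q v) v); last by move=> h; rewrite /upd eqxx.
  by apply: sat_ext => h a Ha; rewrite /upd; case: eqP => // E; subst.
by split=> [[v [_ [/E Gv Rv]]]|[v [Rv /E Gv]]]; exists v.
Qed.

Lemma move_x (AP : finType) (G rel : form (atm AP)) (R : nat -> nat -> nat -> Prop) :
  (forall lab x y p, sat (ival lab x y) rel p <-> R x y p) ->
  exists G', forall lab x y,
    sat (ival lab x y) G' 0 <-> exists x', R x y x' /\ sat (ival lab x' y) G 0.
Proof.
move=> HR; have [G' H] := move_marker G rel (Some None).
exists G' => lab x y; rewrite H.
have E x' : sat (upd (ival lab x y) (Some None) x') G 0 <-> sat (ival lab x' y) G 0.
  by apply: sat_ext => h [[p|]|].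
by split=> -[x' [r g]]; exists x'; [move: r g; rewrite HR E|rewrite HR E].
Qed.

Lemma move_y (AP : finType) (G rel : form (atm AP)) (R : nat -> nat -> nat -> Prop) :
  (forall lab x y p, sat (ival lab x y) rel p <-> R x y p) ->
  exists G', forall lab x y,
    sat (ival lab x y) G' 0 <-> exists y', R x y y' /\ sat (ival lab x y') G 0.
Proof.
move=> HR; have [G' H] := move_marker G rel None.
exists G' => lab x y; rewrite H.
have E y' : sat (upd (ival lab x y) None y') G 0 <-> sat (ival lab x y') G 0.
  by apply: sat_ext => h [[p|]|].
by split=> -[y' [r g]]; exists y'; [move: r g; rewrite HR E|rewrite HR E].
Qed.

Lemma move_xy (AP : finType) (G rel1 rel2 : form (atm AP)) (R1 R2 : nat -> nat -> nat -> Prop) :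
  (forall lab x y p, sat (ival lab x y) rel1 p <-> R1 x y p) ->
  (forall lab x y p, sat (ival lab x y) rel2 p <-> R2 x y p) ->
  exists G', forall lab x y, sat (ival lab x y) G' 0 <->
    exists x' y', [/\ R1 x y x', R2 x' y y' & sat (ival lab x' y') G 0].
Proof.
move=> H1 H2; have [G1 E1] := move_y G H2; have [G2 E2] := move_x G1 H1.
exists G2 => lab x y; rewrite E2; split.
- by move=> [x' [r]]; rewrite E1 => -[y' [r' g]]; exists x', y'.
- by move=> [x' [y' [r r' g]]]; exists x'; split => //; rewrite E1; exists y'.
Qed.

Lemma move_yx (AP : finType) (G rel1 rel2 : form (atm AP)) (R1 R2 : nat -> nat -> nat -> Prop) :
  (forall lab x y p, sat (ival lab x y) rel1 p <-> R1 x y p) ->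
  (forall lab x y p, sat (ival lab x y) rel2 p <-> R2 x y p) ->
  exists G', forall lab x y, sat (ival lab x y) G' 0 <->
    exists y' x', [/\ R1 x y y', R2 x y' x' & sat (ival lab x' y') G 0].
Proof.
move=> H1 H2; have [G1 E1] := move_x G H2; have [G2 E2] := move_y G1 H1.
exists G2 => lab x y; rewrite E2; split.
- by move=> [y' [r]]; rewrite E1 => -[x' [r' g]]; exists y', x'.
- by move=> [y' [x' [r r' g]]]; exists y'; split => //; rewrite E1; exists x'.
Qed.

Section MarkerRelations.
Variables (V : Type) (w : nat -> V -> Prop) (A : form V) (c : nat).
Hypothesis A_at_c : forall s, sat w A s <-> s = c.

Lemma sat_Ps_at p : sat w (Ps A) p <-> c < p.
Proof.
by rewrite sat_Ps; split => [[s [sp /A_at_c <-]]//|cp]; exists c; split => //; apply/A_at_c.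
Qed.

Lemma sat_Fs_at p : sat w (Fs A) p <-> p < c.
Proof.
by rewrite sat_Fs; split => [[s [sp /A_at_c <-]]//|cp]; exists c; split => //; apply/A_at_c.
Qed.

Lemma sat_Pns_at p : sat w (Pns A) p <-> c <= p.
Proof.
by rewrite sat_Pns; split => [[s [sp /A_at_c <-]]//|cp]; exists c; split => //; apply/A_at_c.
Qed.

Lemma sat_Fns_at p : sat w (Fns A) p <-> p <= c.
Proof.
by rewrite sat_Fns; split => [[s [sp /A_at_c <-]]//|cp]; exists c; split => //; apply/A_at_c.
Qed.

End MarkerRelations.

Lemma sat_MX (AP : finType) (lab : nat -> {set AP}) x y s : sat (ival lab x y) MX s <-> s = x.
Proof. by []. Qed.

Lemma sat_MY (AP : finType) (lab : nat -> {set AP}) x y s : sat (ival lab x y) MY s <-> s = y.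
Proof. by []. Qed.

Lemma sat_FAnd V w (f g : form V) t : sat w (FAnd f g) t <-> sat w f t /\ sat w g t.
Proof. by []. Qed.

Ltac marker_rel := move=> ? ? ? ?; rewrite ?sat_FAnd
  ?(sat_Ps_at (sat_MX _ _ _)) ?(sat_Fs_at (sat_MX _ _ _)) ?(sat_Pns_at (sat_MX _ _ _))
  ?(sat_Fns_at (sat_MX _ _ _)) ?(sat_Ps_at (sat_MY _ _ _)) ?(sat_Fs_at (sat_MY _ _ _))
  ?(sat_Pns_at (sat_MY _ _ _)) ?(sat_Fns_at (sat_MY _ _ _)) ?sat_MX ?sat_MY; apply: iff_refl.

Ltac hs_fin IH := repeat match goal with |- _ /\ _ => split | |- [/\ _, _ & _] => split end;
  try (rewrite -IH; [assumption|lia]); try (rewrite IH; [assumption|lia]); try lia; try done.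

Lemma hs_prop_trans (AP : finType) (p : AP) : exists G : form (atm AP), forall lab x y, x <= y ->
  (hs_sat lab x y (HSProp p) <-> sat (ival lab x y) G 0).
Proof.
set tgt : form (atm AP) := FAnd (FAtom (Some (Some p))) MY.
set hold : form (atm AP) := FAtom (Some (Some p)).
exists (Fns (FAnd MX (FOr tgt (FAnd hold (FUntil true tgt hold))))) => lab x y xy.
rewrite sat_Fns; split.
- move=> H; exists x; split => //; split => //.
  apply/(reach_iff_until true (sat (ival lab x y) tgt) (sat (ival lab x y) hold)).
  exists y; split => //; first by split => //; apply: H; apply/andP; lia.
  by move=> u /= xu uy; apply: H; apply/andP; lia.
- move=> [s [_ [Es U]]]; have {}Es : s = x := Es; subst s.
  have [L [/= xL [pL <-] Hu]] := proj2 (reach_iff_until true (sat (ival lab x y) tgt) _ x) U.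
  move=> h /andP[xh hy]; case: (ltnP h L) => hL; first exact: Hu.
  by have -> : h = L by lia.
Qed.

Tactic Notation "move_markers" constr(mv) constr(G) uconstr(r1) uconstr(r2) :=
  let G' := fresh "G'" in let H := fresh "H" in
  have [G' H] := mv _ G r1 r2 _ _ ltac:(marker_rel) ltac:(marker_rel);
  exists G' => lab x y xy; rewrite H.

Lemma hs_dia_trans (AP : finType) (X : allen) (g : hs AP) (G : form (atm AP)) :
  (forall lab x y, x <= y -> (hs_sat lab x y g <-> sat (ival lab x y) G 0)) ->
  exists G', forall lab x y, x <= y -> (hs_sat lab x y (HSDia X g) <-> sat (ival lab x y) G' 0).
Proof.
move=> IH; case: X.
- move_markers @move_xy G MY (Pns MX).
  by split=> [[v [yv Hg]]|[_ [v [-> yv Hg]]]]; [exists y, v|exists v]; hs_fin IH.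
- move_markers @move_xy G (Ps MY) (Pns MX).
  by split=> [[z [v [yz [zv Hg]]]]|[z [v [yz zv Hg]]]]; exists z, v; hs_fin IH.
- move_markers @move_xy G MX (FAnd (Pns MX) (Fs MY)).
  by split=> [[z [xz [zy Hg]]]|[_ [z [-> [xz zy] Hg]]]]; [exists x, z|exists z]; hs_fin IH.
- move_markers @move_xy G (FAnd (Ps MX) (Fns MY)) MY.
  by split=> [[v [xv [vy Hg]]]|[v [_ [[xv vy] -> Hg]]]]; [exists v, y|exists v]; hs_fin IH.
- move_markers @move_xy G (FAnd (Ps MX) (Fs MY)) (FAnd (Pns MX) (Fs MY)).
  by split=> [[v [z [xv [vz [zy Hg]]]]]|[v [z [[xv vy] [vz zy] Hg]]]]; exists v, z; hs_fin IH.
- move_markers @move_xy G (FAnd (Ps MX) (Fns MY)) (Ps MY).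
  by split=> [[v [z [xv [vy [yz Hg]]]]]|[v [z [[xv vy] yz Hg]]]]; exists v, z; hs_fin IH.
- move_markers @move_yx G MX (Fns MY).
  by split=> [[v [vx Hg]]|[_ [v [-> vx Hg]]]]; [exists x, v|exists v]; hs_fin IH.
- move_markers @move_yx G (Fs MX) (Fns MY).
  by split=> [[v [z [vz [zx Hg]]]]|[z [v [zx vz Hg]]]]; [exists z, v|exists v, z]; hs_fin IH.
- move_markers @move_xy G MX (Ps MY).
  by split=> [[z [yz Hg]]|[_ [z [-> yz Hg]]]]; [exists x, z|exists z]; hs_fin IH.
- move_markers @move_xy G (Fs MX) MY.
  by split=> [[v [vx Hg]]|[v [_ [vx -> Hg]]]]; [exists v, y|exists v]; hs_fin IH.
- move_markers @move_xy G (Fs MX) (Ps MY).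
  by split=> [[v [z [vx [yz Hg]]]]|[v [z [vx yz Hg]]]]; exists v, z; hs_fin IH.
- move_markers @move_yx G (FAnd (Pns MX) (Fs MY)) (Fs MX).
  by split=> [[v [z [vx [xz [zy Hg]]]]]|[z [v [[xz zy] vx Hg]]]];
    [exists z, v|exists v, z]; hs_fin IH.
Qed.

Lemma hs_trans (AP : finType) (g : hs AP) : exists G : form (atm AP), forall lab x y, x <= y ->
  (hs_sat lab x y g <-> sat (ival lab x y) G 0).
Proof.
elim: g => [p|g [G IH]|g1 [G1 IH1] g2 [G2 IH2]|X g [G IH]].
- exact: hs_prop_trans.
- by exists (FNot G) => lab x y xy /=; rewrite IH.
- by exists (FAnd G1 G2) => lab x y xy /=; rewrite IH1 ?IH2.
- exact: hs_dia_trans IH.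
Qed.

Definition trace_val (AP : finType) (lab : nat -> {set AP}) : nat -> atm AP -> Prop :=
  fun h a => if a is Some (Some p) then p \in lab h else False.

Fixpoint to_ltl (AP : finType) (f : form (atm AP)) : ltl AP :=
  match f with
  | FTrue => LTrue _
  | FAtom (Some (Some p)) => LProp p
  | FAtom _ => LNot (LTrue _)
  | FNot g => LNot (to_ltl g)
  | FAnd g h => LAnd (to_ltl g) (to_ltl h)
  | FOr g h => LNot (LAnd (LNot (to_ltl g)) (LNot (to_ltl h)))
  | FUntil _ g h => LNext (LUntil (to_ltl h) (to_ltl g))
  end.

Lemma ltl_sat_to_ltl (AP : finType) (f : form (atm AP)) lab : pure true f ->
  forall t, ltl_sat lab t (to_ltl f) <-> sat (trace_val lab) f t.
Proof.
elim: f => [|[[p|]|]|g IH|g IHg h IHh|g IHg h IHh|d' g IHg h IHh] //= pf t.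
- by rewrite IH.
- by case/andP: pf => pg ph; rewrite IHg ?IHh.
- by case/andP: pf => pg ph; rewrite IHg ?IHh //; tauto.
- case/andP: pf => /andP[/eqP -> pg] ph.
  split=> -[s [ts [gs H]]]; exists s; split => //; split.
  + by rewrite -IHg.
  + by move=> r r1 r2; rewrite -IHh //; apply: H; apply/andP.
  + by rewrite IHg.
  + by move=> r /andP[r1 r2]; rewrite IHh //; apply: H.
Qed.

(* The right marker is moved to position [i], the left one sits at the origin
   and becomes [Finit]; separating [G D] at 0 leaves a pure future formula. *)
Lemma hs_lin_trace_ltl (AP : finType) (psi : hs AP) : exists phi : ltl AP,
  forall lab : nat -> {set AP}, (forall i, hs_sat lab 0 i psi) <-> ltl_sat lab 0 phi.
Proof.
have [G HG] := hs_trans psi.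
have [D nD HD] := marker_elim G (None : atm AP).
pose init_x (a : atm AP) : form (atm AP) := if a is Some (Some p) then FAtom a else Finit.
have [G' pG' HG'] := future_at0 (bind (FNot (Fns (FNot D))) init_x).
exists (to_ltl G') => lab; rewrite ltl_sat_to_ltl // -HG' sat_bind.
set W := fun h a => sat (trace_val lab) (init_x a) h.
change ((forall i, hs_sat lab 0 i psi) <-> ~ sat W (Fns (FNot D)) 0); rewrite sat_Fns.
have ED i : sat W D i <-> sat (ival lab 0 i) D i.
  by apply: sat_ext => h [[p|]|] // _; apply: sat_Finit.
split=> [H [i [_ /ED nDi]]|H i].
  by apply/nDi; rewrite -(HD _ i) // -HG.
by rewrite HG // (HD _ i) // -ED; apply: NNPP => nDi; apply: H; exists i.
Qed.

Theorem theorem3p2 (AP : finType) (psi : hs AP) :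
  exists phi : ltl AP, forall K : Kripke AP,
    hs_models_lin K psi <-> ltl_models K phi.
Proof.
have [phi Hphi] := hs_lin_trace_ltl psi.
exists phi => K; split=> H pi Hpi; [rewrite -Hphi|rewrite Hphi]; exact: H.
Qed.
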